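(* For every simplicial set $X$ and every fibrant replacement $j\colon \mathrm{Lan}_{\blacktriangle}X \to (\mathrm{Lan}_{\blacktriangle}X)^{\mathrm{fib}}$ (a trivial cofibration with fibrant codomain) in the model structure on $\widehat{\overline{\square}}_\vee$, the derived unit composite $X \xrightarrow{\eta_X} \blacktriangle^*\mathrm{Lan}_{\blacktriangle}X \xrightarrow{\blacktriangle^* j} \blacktriangle^*((\mathrm{Lan}_{\blacktriangle}X)^{\mathrm{fib}})$ is a weak equivalence in the Kan–Quillen model structure, where $\eta$ is the unit of the adjunction $\mathrm{Lan}_\blacktriangle\dashv\blacktriangle^*$.
   Context: $\mathbf{SLat}$ is the category of (join-)semilattices (sets with an associative, commutative, idempotent binary operation $\vee$) and $\vee$-preserving maps. $\overline{\square}_\vee$ is the full subcategory of $\mathbf{SLat}$ on finite inhabited semilattices whose induced order ($x\le y\iff x\vee y=y$) is a distributive lattice. $\Delta$ is the simplex category and $\blacktriangle\colon \Delta\hookrightarrow\overline{\square}_\vee$ regards $[n]$ as a semilattice with $\vee=\max$; $\blacktriangle^*$ is restriction along $\blacktriangle$ and $\mathrm{Lan}_\blacktriangle$ its left adjoint. Presheaf categories consist of presheaves of $\kappa$-small sets for a fixed strongly inaccessible cardinal $\kappa$. The model structure on $\widehat{\overline{\square}}_\vee$ has monomorphisms as cofibrations and as fibrations the maps with the right lifting property against all pushout products $\delta_k\hat\times m$, where $\mathbb I$ is the representable on $[1]=\{0<1\}$, $\delta_k\colon 1\to\mathbb I$ ($k=0,1$) are the endpoint inclusions, $m$ ranges over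 monomorphisms, and the pushout product of $f\colon X\to Y$, $g\colon X'\to Y'$ is $(X\times Y')\sqcup_{X\times X'}(Y\times X')\to Y\times Y'$. *)

From Stdlib Require Import ProofIrrelevance FunctionalExtensionality.
From HB Require Import structures.
From mathcomp Require Import all_boot.
From mathcomp Require Import zify.

Set Implicit Arguments.
Unset Strict Implicit.
Unset Printing Implicit Defensive.

Lemma sig_ext (A : Type) (P : A -> Prop) (x y : sig P) :
  proj1_sig x = proj1_sig y -> x = y.
Proof. by case: x => x px; case: y => y py /= E; subst y; f_equal; apply: proof_irrelevance. Qed.

Record Cat := {
  cobj :> Type;
  chom : cobj -> cobj -> Type;
  cid : forall c, chom c c;
  ccomp : forall a b c, chom b c -> chom a b -> chom a c;
  ccomp_id_r : forall a b (f : chom a b), ccomp f (cid a) = f;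
  ccomp_assoc : forall a b c d (f : chom c d) (g : chom b c) (h : chom a b),
      ccomp f (ccomp g h) = ccomp (ccomp f g) h }.
Arguments ccomp {_ _ _ _}.
Arguments cid {_}.
Arguments chom : clear implicits.

Record PSh (C : Cat) := {
  ps :> C -> Type;
  act : forall c d : C, chom C c d -> ps d -> ps c;
  act_id : forall c x, act (cid c) x = x;
  act_comp : forall a b c (f : chom C b c) (g : chom C a b) x,
      act (ccomp f g) x = act g (act f x) }.
Arguments act {C} p {c d}.

Record NT (C : Cat) (X Y : PSh C) := {
  nt :> forall c : C, X c -> Y c;
  nt_nat : forall (c d : C) (f : chom C c d) x, nt (act X f x) = act Y f (nt x) }.
Arguments nt {C X Y} n c.

Section Generic.
Variable C : Cat.

Definition ntcomp (X Y Z : PSh C) (g : NT Y Z) (f : NT X Y) : NT X Z.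
Proof.
refine (@Build_NT C X Z (fun c x => g c (f c x)) _).
by move=> c d h x; rewrite !nt_nat.
Defined.

Definition mono (A B : PSh C) (m : NT A B) : Prop := forall c, injective (m c).

Definition lifts (A B X Y : PSh C) (i : NT A B) (p : NT X Y) : Prop :=
  forall (u : NT A X) (v : NT B Y),
    (forall c a, p c (u c a) = v c (i c a)) ->
    exists h : NT B X,
      (forall c a, h c (i c a) = u c a) /\ (forall c b, p c (h c b) = v c b).

Definition termP : PSh C.
Proof. by refine {| ps := fun _ => unit; act := fun _ _ _ x => x |}. Defined.

Definition toTerm (X : PSh C) : NT X termP.
Proof. by refine (@Build_NT C X termP (fun c _ => tt) _). Defined.

Definition prodP (X Y : PSh C) : PSh C.
Proof.
refine {| ps := fun c => (X c * Y c)%type;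
          act := fun c d f xy => (act X f xy.1, act Y f xy.2) |}.
- by move=> c [x y] /=; rewrite !act_id.
- by move=> a b c f g [x y] /=; rewrite !act_comp.
Defined.

Definition yo (c : C) : PSh C.
Proof.
refine {| ps := fun d => chom C d c;
          act := fun d e (f : chom C d e) (g : chom C e c) => ccomp g f |}.
- by move=> d g; rewrite ccomp_id_r.
- by move=> a b d f g h; rewrite ccomp_assoc.
Defined.

Definition subP (X : PSh C) (P : forall c, X c -> Prop)
  (HP : forall c d (f : chom C c d) x, P d x -> P c (act X f x)) : PSh C.
Proof.
refine {| ps := fun c => {x : X c | P c x};
          act := fun c d f x => exist _ (act X f (proj1_sig x)) (HP _ _ f _ (proj2_sig x)) |}.
- by move=> c x; apply: sig_ext; rewrite /= act_id.
- by move=> a b c f g x; apply: sig_ext; rewrite /= act_comp.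
Defined.

Definition subP_incl (X : PSh C) P HP : NT (@subP X P HP) X.
Proof. by refine (@Build_NT C (@subP X P HP) X (fun c x => proj1_sig x) _). Defined.

End Generic.

Record Functor (C D : Cat) := {
  fob :> C -> D;
  fmap : forall a b : C, chom C a b -> chom D (fob a) (fob b);
  fmap_id : forall a, fmap (cid a) = cid (fob a);
  fmap_comp : forall a b c (f : chom C b c) (g : chom C a b),
      fmap (ccomp f g) = ccomp (fmap f) (fmap g) }.
Arguments fmap {C D} _ {a b}.
Arguments fob {C D}.

Definition restrict (C D : Cat) (F : Functor C D) (Y : PSh D) : PSh C.
Proof.
refine {| ps := fun c => Y (F c); act := fun c d f y => act Y (fmap F f) y |}.
- by move=> c y; rewrite fmap_id act_id.
- by move=> a b c f g y; rewrite fmap_comp act_comp.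
Defined.

Definition restrict_nt (C D : Cat) (F : Functor C D) (Y Z : PSh D) (a : NT Y Z) :
  NT (restrict F Y) (restrict F Z).
Proof.
refine (@Build_NT C (restrict F Y) (restrict F Z) (fun c y => a (F c) y) _).
by move=> c d f y /=; rewrite nt_nat.
Defined.

Definition DHom (m n : nat) :=
  {f : 'I_m.+1 -> 'I_n.+1 | forall i j : 'I_m.+1, i <= j -> f i <= f j}.

Definition Delta : Cat.
Proof.
refine {| cobj := nat; chom := DHom;
          cid := fun n => exist (fun f : 'I_n.+1 -> 'I_n.+1 => forall i j : 'I_n.+1, i <= j -> f i <= f j) id (fun i j h => h);
          ccomp := fun a b c (f : DHom b c) (g : DHom a b) =>
             exist (fun F : 'I_a.+1 -> 'I_c.+1 => forall i j : 'I_a.+1, i <= j -> F i <= F j)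
               (fun i => proj1_sig f (proj1_sig g i))
               (fun i j h => proj2_sig f _ _ (proj2_sig g _ _ h)) |}.
- by move=> a b f; apply: sig_ext.
- by move=> a b c d f g h; apply: sig_ext.
Defined.

Definition sSet := PSh Delta.

Definition horn_pred (n : nat) (k : 'I_n.+2) (m : Delta) (f : yo (n.+1 : Delta) m) : Prop :=
  exists j : 'I_n.+2, j != k /\ forall i, proj1_sig f i != j.

Lemma horn_stable n k : forall (c d : Delta) (f : chom Delta c d) x,
  horn_pred k x -> horn_pred k (act (yo (n.+1 : Delta)) f x).
Proof. move=> c d f x [j [jk H]]; exists j; split=> // i; exact: H. Qed.

Definition horn (n : nat) (k : 'I_n.+2) : sSet := subP (@horn_stable n k).
Definition horn_incl (n : nat) (k : 'I_n.+2) : NT (horn k) (yo (n.+1 : Delta)) :=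
  subP_incl (@horn_stable n k).

(* Kan--Quillen model structure: cofibrations = monos, fibrations = Kan fibrations *)
Definition kan_fib (X Y : sSet) (p : NT X Y) : Prop :=
  forall n (k : 'I_n.+2), lifts (horn_incl k) p.

Definition KQ_triv_fib (X Y : sSet) (p : NT X Y) : Prop :=
  forall (A B : sSet) (m : NT A B), mono m -> lifts m p.

Definition KQ_triv_cof (A B : sSet) (i : NT A B) : Prop :=
  forall (X Y : sSet) (p : NT X Y), kan_fib p -> lifts i p.

Definition KQ_weq (X Y : sSet) (f : NT X Y) : Prop :=
  exists (Z : sSet) (i : NT X Z) (p : NT Z Y),
    KQ_triv_cof i /\ KQ_triv_fib p /\ forall c x, p c (i c x) = f c x.

Definition sl_le (T : Type) (j : T -> T -> T) (x y : T) : Prop := j x y = y.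

Definition is_distr_lattice (T : Type) (j : T -> T -> T) : Prop :=
  exists m : T -> T -> T,
    (forall x y, sl_le j (m x y) x /\ sl_le j (m x y) y /\
                 forall z, sl_le j z x -> sl_le j z y -> sl_le j z (m x y)) /\
    (forall x y z, m x (j y z) = j (m x y) (m x z)).

Record SLObj := {
  sl_n : nat;
  sl_join : 'I_sl_n.+1 -> 'I_sl_n.+1 -> 'I_sl_n.+1;
  sl_assoc : forall x y z, sl_join x (sl_join y z) = sl_join (sl_join x y) z;
  sl_comm : forall x y, sl_join x y = sl_join y x;
  sl_idem : forall x, sl_join x x = x;
  sl_distr : is_distr_lattice sl_join }.

Definition SLHom (c d : SLObj) :=
  {f : 'I_(sl_n c).+1 -> 'I_(sl_n d).+1 |
     forall x y, f (sl_join x y) = sl_join (f x) (f y)}.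

Definition SLcomp (a b c : SLObj) (f : SLHom b c) (g : SLHom a b) : SLHom a c.
Proof.
exists (fun i => proj1_sig f (proj1_sig g i)).
by move=> x y /=; rewrite (proj2_sig g) (proj2_sig f).
Defined.

Definition SL : Cat.
Proof.
refine {| cobj := SLObj; chom := SLHom;
          cid := fun c => exist (fun f : 'I_(sl_n c).+1 -> 'I_(sl_n c).+1 => forall x y, f (sl_join x y) = sl_join (f x) (f y)) id (fun x y => erefl);
          ccomp := SLcomp |}.
- by move=> a b f; apply: sig_ext.
- by move=> a b c d f g h; apply: sig_ext.
Defined.

Definition trijoin (n : nat) (x y : 'I_n.+1) : 'I_n.+1 := if x <= y then y else x.

Lemma trijoin_val n (x y : 'I_n.+1) : nat_of_ord (trijoin x y) = maxn x y.
Proof. by rewrite /trijoin /maxn; case: leqP => h; case: ltnP => h' //; lia. Qed.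

Definition trimeet (n : nat) (x y : 'I_n.+1) : 'I_n.+1 := if x <= y then x else y.

Lemma trimeet_val n (x y : 'I_n.+1) : nat_of_ord (trimeet x y) = minn x y.
Proof. by rewrite /trimeet /minn; case: leqP => h; case: ltnP => h' //; lia. Qed.

Lemma tri_le n (x y : 'I_n.+1) : sl_le (@trijoin n) x y <-> x <= y.
Proof.
rewrite /sl_le; split.
- by move/(congr1 (@nat_of_ord _)); rewrite trijoin_val => <-; lia.
- by move=> h; apply: val_inj; rewrite /= trijoin_val; lia.
Qed.

Definition tri (n : nat) : SLObj.
Proof.
refine {| sl_n := n; sl_join := @trijoin n |}.
- by move=> x y z; apply: val_inj; rewrite /= !trijoin_val; lia.
- by move=> x y; apply: val_inj; rewrite /= !trijoin_val; lia.
- by move=> x; apply: val_inj; rewrite /= !trijoin_val; lia.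
- exists (@trimeet n); split.
  + move=> x y; rewrite !tri_le !trimeet_val; split; [lia|split; [lia|]].
    by move=> z; rewrite !tri_le trimeet_val; lia.
  + by move=> x y z; apply: val_inj; rewrite /= !(trijoin_val, trimeet_val); lia.
Defined.

Definition tri_map (m n : nat) (f : DHom m n) : SLHom (tri m) (tri n).
Proof.
exists (proj1_sig f) => x y /=; rewrite /trijoin.
case: (leqP x y) => h.
- by rewrite (proj2_sig f _ _ h).
- have h2 := proj2_sig f _ _ (ltnW h).
  by case: leqP => h3 //; apply/eqP; rewrite -val_eqE /= eqn_leq h2 h3.
Defined.

Definition blacktriangle : Functor Delta SL.
Proof.
refine {| fob := (tri : Delta -> SL); fmap := tri_map |}.
- by move=> a; apply: sig_ext.
- by move=> a b c f g; apply: sig_ext.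
Defined.

Definition slPSh := PSh SL.

Definition Intv : slPSh := yo (tri 1 : SL).

Definition const_hom (c : SL) (k : 'I_2) : chom SL c (tri 1 : SL).
Proof. by exists (fun _ => k) => x y /=; rewrite /trijoin leqnn. Defined.

Definition delta (k : 'I_2) : NT (termP SL) Intv.
Proof.
refine (@Build_NT SL (termP SL) Intv (fun c (_ : unit) => const_hom c k) _).
by move=> c d f x; apply: sig_ext.
Defined.

(* right lifting property of p against the pushout product delta_k ^x m,
   i.e. against the induced map (I x A) +_{1 x A} (1 x B) -> I x B;
   maps out of the pushout are given by compatible pairs (u, v). *)
Definition pp_lifts (k : 'I_2) (A B : slPSh) (m : NT A B) (X Y : slPSh) (p : NT X Y) : Prop :=
  forall (u : NT (prodP Intv A) X) (v : NT (prodP (termP SL) B) X) (w : NT (prodP Intv B) Y),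
    (forall c t a, u c (delta k c t, a) = v c (t, m c a)) ->
    (forall c i a, p c (u c (i, a)) = w c (i, m c a)) ->
    (forall c t b, p c (v c (t, b)) = w c (delta k c t, b)) ->
    exists h : NT (prodP Intv B) X,
      (forall c i a, h c (i, m c a) = u c (i, a)) /\
      (forall c t b, h c (delta k c t, b) = v c (t, b)) /\
      (forall c ib, p c (h c ib) = w c ib).

Definition cub_fib (X Y : slPSh) (p : NT X Y) : Prop :=
  forall (k : 'I_2) (A B : slPSh) (m : NT A B), mono m -> pp_lifts k m p.

Definition cub_fibrant (F : slPSh) : Prop := cub_fib (toTerm F).

Definition cub_triv_cof (A B : slPSh) (j : NT A B) : Prop :=
  mono j /\ forall (X Y : slPSh) (p : NT X Y), cub_fib p -> lifts j p.

Definition is_lan_unit (X : sSet) (L : slPSh) (eta : NT X (restrict blacktriangle L)) : Prop :=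
  forall (Y : slPSh) (g : NT X (restrict blacktriangle Y)),
    exists h : NT L Y,
      (forall n x, h (tri n) (eta n x) = g n x) /\
      (forall h' : NT L Y, (forall n x, h' (tri n) (eta n x) = g n x) ->
         forall c y, h' c y = h c y).

(* Up to the unit [eta], which is invertible because [blacktriangle] is fully
   faithful, the composite is the restriction [blacktriangle^* j]. Restriction
   has a right adjoint [Ran], and [Ran] sends Kan fibrations to fibrations:
   by adjunction, the pushout products [delta_k x^ m] restrict to pushout
   products of an endpoint of [Delta^1] with a monomorphism, and a Kan
   fibration lifts against these by filling the prisms [Delta^1 x Delta^n]
   over the missing simplices, one [(n+1)]-simplex at a time along a horn,
   in order of increasing dimension (the induction being organised by Zorn's
   lemma). Hence [j o eta] has the left lifting property against all Kan
   fibrations: it is a trivial cofibration, so a weak equivalence. *)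

From Stdlib Require Import ProofIrrelevance FunctionalExtensionality Classical ClassicalEpsilon.
From mathcomp Require Import all_boot zify.
From mathcomp Require boolp classical_sets.

Set Implicit Arguments.
Unset Strict Implicit.
Unset Printing Implicit Defensive.

Lemma nt_ext (C : Cat) (X Y : PSh C) (a b : NT X Y) :
  (forall c x, a c x = b c x) -> a = b.
Proof.
case: a => a Ha; case: b => b Hb /= E.
have eab : a = b.
  by apply: functional_extensionality_dep => c; apply: functional_extensionality.
by subst b; congr Build_NT; apply: proof_irrelevance.
Qed.

Definition stable (C : Cat) (X : PSh C) (S : forall c, X c -> Prop) : Prop :=
  forall c d (f : chom C c d) x, S d x -> S c (act X f x).

(** * Degeneracies in the simplex category *)

Lemma dhom_ext (m n : nat) (f g : chom Delta m n) :
  proj1_sig f =1 proj1_sig g -> f = g.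
Proof. by move=> E; apply: sig_ext; apply: functional_extensionality. Qed.

Lemma dhom_mono (m n : nat) (f : chom Delta m n) (i j : 'I_m.+1) :
  i <= j -> proj1_sig f i <= proj1_sig f j.
Proof. exact: (proj2_sig f). Qed.

Definition dsurj (m n : nat) (f : chom Delta m n) : Prop :=
  forall y : 'I_n.+1, exists x, proj1_sig f x = y.

Lemma nondsurj_factor (c n : nat) (g : chom Delta c n.+1) :
  ~ dsurj g -> exists (g' : chom Delta c n) (d : chom Delta n n.+1), g = ccomp d g'.
Proof.
move=> nsurj.
have [l gNl] : exists l : 'I_n.+2, forall x, proj1_sig g x != l.
  apply: NNPP => all_hit; apply: nsurj => y; apply: NNPP => y_missed.
  by apply: all_hit; exists y => x; apply/eqP => gx; apply: y_missed; exists x.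
pose gf (x : 'I_c.+1) : 'I_n.+1 :=
  inord (if proj1_sig g x < l then proj1_sig g x : nat else (proj1_sig g x).-1).
pose df (y : 'I_n.+1) : 'I_n.+2 := inord (if y < l then y : nat else y.+1).
have gfE x : gf x = (if proj1_sig g x < l then proj1_sig g x : nat else (proj1_sig g x).-1) :> nat.
  rewrite inordK //; have := ltn_ord (proj1_sig g x); have := ltn_ord l.
  by have := gNl x; rewrite -val_eqE /=; case: ifP; lia.
have dfE y : df y = (if y < l then y : nat else y.+1) :> nat.
  by rewrite inordK //; have := ltn_ord y; case: ifP; lia.
have gf_mono (i j : 'I_c.+1) : i <= j -> gf i <= gf j.
  move=> le_ij; rewrite !gfE; have := dhom_mono g le_ij.
  by have := gNl i; have := gNl j; rewrite -!val_eqE /=; do 2 case: ifP; lia.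
have df_mono (i j : 'I_n.+1) : i <= j -> df i <= df j.
  by move=> le_ij; rewrite !dfE; do 2 case: ifP; lia.
exists (exist _ gf gf_mono), (exist _ df df_mono); apply: dhom_ext => x /=.
apply: val_inj; rewrite /= dfE gfE; have := gNl x; rewrite -val_eqE /=.
by do 2 case: ifP; lia.
Qed.

Lemma dsurj_min_section (c n : nat) (s : chom Delta c n) : dsurj s ->
  exists t : chom Delta n c, (forall y, proj1_sig s (proj1_sig t y) = y) /\
     (forall x, proj1_sig t (proj1_sig s x) <= x).
Proof.
move=> s_surj.
have fiber_min y : exists x, [/\ proj1_sig s x = y & forall x', proj1_sig s x' = y -> x <= x'].
  have [x0 sx0] := s_surj y.
  have /(@arg_minnP _ x0 (fun x => proj1_sig s x == y) (@nat_of_ord _)) : proj1_sig s x0 == y.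
    by apply/eqP.
  by case=> x /eqP sx x_min; exists x; split=> // x' sx'; apply: x_min; apply/eqP.
pose t y := proj1_sig (constructive_indefinite_description _ (fiber_min y)).
have tP y : [/\ proj1_sig s (t y) = y & forall x', proj1_sig s x' = y -> t y <= x'].
  exact: proj2_sig (constructive_indefinite_description _ (fiber_min y)).
have t_mono (i j : 'I_n.+1) : i <= j -> t i <= t j.
  move=> le_ij; rewrite leqNgt; apply/negP => lt_ji.
  have [si _] := tP i; have [sj _] := tP j.
  have := dhom_mono s (ltnW lt_ji); rewrite si sj => le_ji.
  have eij : i = j by apply: val_inj; apply/eqP; rewrite eqn_leq le_ij le_ji.
  by move: lt_ji; rewrite eij ltnn.
exists (exist _ t t_mono); split=> [y|x] /=; first by have [] := tP y.
by have [_] := tP (proj1_sig s x); apply.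
Qed.

Lemma dhom_inj_endo_id (n : nat) (f : chom Delta n n) :
  injective (proj1_sig f) -> proj1_sig f =1 id.
Proof.
move=> f_inj.
have f_lt (i j : 'I_n.+1) : i < j -> proj1_sig f i < proj1_sig f j.
  move=> lt_ij; rewrite ltn_neqAle dhom_mono ?(ltnW lt_ij) // andbT.
  by apply/negP => /eqP /val_inj /f_inj eij; move: lt_ij; rewrite eij ltnn.
have ge_id k (hk : k < n.+1) : k <= proj1_sig f (Ordinal hk).
  elim: k hk => [//|k IH] hk.
  have hk' : k < n.+1 by lia.
  by have := f_lt (Ordinal hk') (Ordinal hk) (ltnSn k); have := IH hk'; lia.
have le_id d k (hk : k < n.+1) : k + d = n -> proj1_sig f (Ordinal hk) <= k.
  elim: d k hk => [|d IH] k hk e.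
    by have := ltn_ord (proj1_sig f (Ordinal hk)); lia.
  have hk' : k.+1 < n.+1 by lia.
  by have := f_lt (Ordinal hk) (Ordinal hk') (ltnSn k); have := IH k.+1 hk' ltac:(lia); lia.
move=> [k hk]; apply: val_inj; apply/eqP; rewrite eqn_leq ge_id andbT.
by apply: (le_id (n - k)); lia.
Qed.

Lemma dsurj_endo_id (n : nat) (f : chom Delta n n) : dsurj f -> f = cid (n : Delta).
Proof.
move=> f_surj; have [t [ft _]] := dsurj_min_section f_surj.
have t_id : proj1_sig t =1 id.
  by apply: dhom_inj_endo_id => a b e; rewrite -(ft a) -(ft b) e.
by apply: dhom_ext => x /=; have := ft x; rewrite t_id.
Qed.

Section MinimalMissingSimplex.
Variables (B : sSet) (S : forall c, B c -> Prop).
Hypothesis S_stable : stable S.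
Variables (n : nat) (b : B n).
Hypothesis b_notin : ~ S b.
Hypothesis below_in : forall m, m < n -> forall y : B m, S y.

Lemma nondsurj_act_in c (g : chom Delta c n) : ~ dsurj g -> S (act B g b).
Proof.
case: n g b b_notin below_in => [|n'] g b' _ below' nsurj.
  exfalso; apply: nsurj => y; exists ord0; apply: val_inj.
  by move: (proj1_sig g ord0) y => [[|//] ?] [[|//] ?].
have [g' [d ->]] := nondsurj_factor nsurj.
by rewrite act_comp; apply: S_stable; apply: below'.
Qed.

Lemma dsurj_act_notin c (g : chom Delta c n) : dsurj g -> ~ S (act B g b).
Proof.
move=> g_surj Sg; have [t [gt _]] := dsurj_min_section g_surj.
apply: b_notin; have := S_stable t Sg; rewrite -act_comp.
have -> : ccomp g t = cid (n : Delta) by apply: dhom_ext => y /=; rewrite gt.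
by rewrite act_id.
Qed.

Lemma act_notin_dsurj c (g : chom Delta c n) : ~ S (act B g b) -> dsurj g.
Proof. by move=> g_notin; apply: NNPP => /nondsurj_act_in. Qed.

(* Uniqueness in the Eilenberg--Zilber lemma. *)
Lemma dsurj_act_inj c (s s' : chom Delta c n) :
  dsurj s -> act B s b = act B s' b -> s = s'.
Proof.
have split_by (r r' : chom Delta c n) (t : chom Delta n c) :
    act B r b = act B r' b -> (forall y, proj1_sig r' (proj1_sig t y) = y) ->
    forall y, proj1_sig r (proj1_sig t y) = y.
  move=> e r't; have /dsurj_endo_id rt : dsurj (ccomp r t).
    apply: act_notin_dsurj; rewrite act_comp e -act_comp.
    have -> : ccomp r' t = cid (n : Delta) by apply: dhom_ext => y /=; rewrite r't.
    by rewrite act_id.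
  by move=> y; have := f_equal (fun f => proj1_sig f y) rt.
move=> s_surj e.
have s'_surj : dsurj s'.
  by apply: act_notin_dsurj; rewrite -e; apply: dsurj_act_notin.
have [t' [s't' t's']] := dsurj_min_section s'_surj.
have [t [st ts]] := dsurj_min_section s_surj.
have st' := split_by _ _ _ e s't'.
have s't := split_by _ _ _ (esym e) st.
apply: dhom_ext => x; apply: val_inj; apply/eqP; rewrite eqn_leq; apply/andP; split.
- by have := dhom_mono s' (ts x); rewrite s't.
- by have := dhom_mono s (t's' x); rewrite st'.
Qed.

End MinimalMissingSimplex.

(** * Filling prisms along horns *)

Section HornExtension.
Variables (T E Y : sSet) (q : NT E Y) (w : NT T Y).
Hypothesis q_kan : kan_fib q.

Definition partial_lift (D : forall c, T c -> Prop) (h : forall c, T c -> E c) : Prop :=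
  (forall c d (f : chom Delta c d) x, D d x -> h c (act T f x) = act E f (h d x)) /\
  (forall c x, D c x -> q c (h c x) = w c x).

Lemma partial_lift_sub (D D' : forall c, T c -> Prop) h :
  (forall c x, D c x -> D' c x) -> partial_lift D' h -> partial_lift D h.
Proof. by move=> DD' [h_nat h_q]; split=> *; [apply: h_nat|apply: h_q]; apply: DD'. Qed.

Variables (D : forall c, T c -> Prop) (h : forall c, T c -> E c).
Hypothesis D_stable : stable D.
Hypothesis h_lift : partial_lift D h.
Variables (n : nat) (s : T n.+1) (k : 'I_n.+2).
Hypothesis faces_in : forall c (f : chom Delta c n.+1), D (act T f s) <-> horn_pred k f.
Hypothesis act_inj_out : forall c (f g : chom Delta c n.+1),
  ~ D (act T f s) -> act T f s = act T g s -> f = g.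

Definition horn_top : NT (horn k) E.
Proof.
refine (@Build_NT Delta (horn k) E (fun c f => h (act T (proj1_sig f) s)) _).
move=> c d f [g hg] /=; rewrite act_comp; apply: (proj1 h_lift).
exact/faces_in.
Defined.

Definition horn_bottom : NT (yo (n.+1 : Delta)) Y.
Proof.
refine (@Build_NT Delta (yo (n.+1 : Delta)) Y (fun c f => w c (act T f s)) _).
by move=> c d f g /=; rewrite act_comp nt_nat.
Defined.

Lemma partial_lift_add_simplex : exists h' : forall c, T c -> E c,
  (forall c x, D x -> h' c x = h x) /\
  partial_lift (fun c x => D x \/ exists f, x = act T f s) h'.
Proof.
have [|G [G_horn G_q]] := @q_kan n k horn_top horn_bottom.
  by move=> c [f hf]; apply: (proj2 h_lift); apply/faces_in.
pose h' c (x : T c) : E c :=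
  match excluded_middle_informative (D x),
        excluded_middle_informative (exists f, x = act T f s) with
  | right _, left fx => G c (proj1_sig (constructive_indefinite_description _ fx))
  | _, _ => h x
  end.
have h'_D c x : D x -> h' c x = h x.
  by move=> Dx; rewrite /h'; case: excluded_middle_informative.
have h'_s c f : h' c (act T f s) = G c f.
  rewrite /h'; case: excluded_middle_informative => [Dx|nD].
    exact: esym (G_horn c (exist _ f (proj1 (faces_in f) Dx))).
  case: excluded_middle_informative => [fx|[]]; last by exists f.
  by case: constructive_indefinite_description => f0 /= /(act_inj_out nD) ->.
exists h'; split=> //; split.
- move=> c d f x [Dx|[g ->]]; last by rewrite -act_comp !h'_s -nt_nat.
  by rewrite !h'_D //; [apply: (proj1 h_lift)|apply: D_stable].
- move=> c x [Dx|[g ->]]; last by rewrite h'_s G_q.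
  by rewrite h'_D //; apply: (proj2 h_lift).
Qed.

End HornExtension.

Lemma tri_hom_mono (a b : nat) (phi : chom SL (tri a : SL) (tri b : SL)) (i j : 'I_a.+1) :
  i <= j -> proj1_sig phi i <= proj1_sig phi j.
Proof.
move=> le_ij; have e : trijoin i j = j by apply/tri_le.
have := proj2_sig phi i j; rewrite /= e => e2.
by apply/tri_le; rewrite /sl_le -e2.
Qed.

Definition untri_map (a b : nat) (phi : chom SL (tri a : SL) (tri b : SL)) : chom Delta a b :=
  exist _ (proj1_sig phi) (@tri_hom_mono a b phi).

Lemma untri_mapK (a b : nat) (phi : chom SL (tri a : SL) (tri b : SL)) :
  tri_map (untri_map phi) = phi.
Proof. exact: sig_ext. Qed.

Definition sIntv : sSet := restrict blacktriangle Intv.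

Definition endpt (k : 'I_2) (c : Delta) : sIntv c := const_hom (tri c) k.

Lemma sIntv_ext c (t t' : sIntv c) : proj1_sig t =1 proj1_sig t' -> t = t'.
Proof. by move=> e; apply: sig_ext; apply: functional_extensionality. Qed.

Lemma act_endpt k c d (f : chom Delta c d) : act sIntv f (endpt k d) = endpt k c.
Proof. exact: sig_ext. Qed.

Definition rel_dom (k : 'I_2) (B : sSet) (S : forall c, B c -> Prop)
  c (x : prodP sIntv B c) : Prop := S c x.2 \/ x.1 = endpt k c.

Lemma rel_dom_stable k (B : sSet) (S : forall c, B c -> Prop) :
  stable S -> stable (rel_dom k S).
Proof.
by move=> S_stable c d f [t y] [Sy|/= ->]; [left; apply: S_stable|right; apply: act_endpt].
Qed.

Lemma not_horn_pred n (k : 'I_n.+2) c (f : chom Delta c n.+1) : ~ horn_pred k f ->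
  forall l : 'I_n.+2, l != k -> exists p, proj1_sig f p = l.
Proof.
move=> f_notin l lk; apply: NNPP => l_missed; apply: f_notin; exists l; split=> // p.
by apply/eqP => fp; apply: l_missed; exists p.
Qed.

Lemma prism_t_mono (i : nat) (n : nat) (p p' : 'I_n.+2) :
  p <= p' -> (inord (i < p) : 'I_2) <= (inord (i < p') : 'I_2).
Proof.
move=> le_pp'; rewrite !inordK; try by case: (i < _).
by case: (ltnP i p); case: (ltnP i p') => //; lia.
Qed.

Lemma prism_x_mono (i : nat) (n : nat) (p p' : 'I_n.+2) :
  p <= p' ->
  (inord (minn n (p - (i < p))) : 'I_n.+1) <= (inord (minn n (p' - (i < p'))) : 'I_n.+1).
Proof. by move=> le_pp'; rewrite !inordK; lia. Qed.

(* The [i]-th simplex of the prism [Delta^1 x Delta^n] has vertices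
   [(0,0), ..., (0,i), (1,i), ..., (1,n)]; these are its two coordinates
   (the [minn n] only matters for the unused [i > n]). *)
Definition prism_t (n i : nat) : chom Delta n.+1 1 :=
  exist _ (fun p : 'I_n.+2 => inord (i < p)) (@prism_t_mono i n).

Definition prism_x (n i : nat) : chom Delta n.+1 n :=
  exist _ (fun p : 'I_n.+2 => inord (minn n (p - (i < p)))) (@prism_x_mono i n).

Arguments prism_t : simpl never.
Arguments prism_x : simpl never.

Lemma prism_tE n i p : proj1_sig (prism_t n i) p = (i < p) :> nat.
Proof. by rewrite /prism_t /= inordK //; case: (i < p). Qed.

Lemma prism_xE n i p : i <= n -> proj1_sig (prism_x n i) p = p - (i < p) :> nat.
Proof. by move=> le_in; rewrite /prism_x /= inordK; have := ltn_ord p; case: ltnP; lia. Qed.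

Section Prism.
Variables (k : 'I_2) (B E Y : sSet) (q : NT E Y) (w : NT (prodP sIntv B) Y).
Hypothesis q_kan : kan_fib q.
Variables (S : forall c, B c -> Prop).
Hypothesis S_stable : stable S.
Variables (n : nat) (b : B n).
Hypothesis b_notin : ~ S b.
Hypothesis below_in : forall m, m < n -> forall y : B m, S y.

Local Notation T := (prodP sIntv B).

Definition prism_simplex (i : nat) : T n.+1 :=
  (tri_map (prism_t n i), act B (prism_x n i) b).

Lemma act_prism_simplex c (f : chom Delta c n.+1) i :
  act T f (prism_simplex i) =
  (tri_map (ccomp (prism_t n i) f), act B (ccomp (prism_x n i) f) b).
Proof. by rewrite /= -act_comp; congr pair; apply: sig_ext. Qed.

Definition prism_dom (J : nat -> Prop) c (x : T c) : Prop :=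
  rel_dom k S x \/ exists j, J j /\ exists g : chom Delta c n.+1, x = act T g (prism_simplex j).

Lemma prism_dom_stable J : stable (prism_dom J).
Proof.
move=> c d f x [Dx|[j [Jj [g ->]]]]; first by left; apply: rel_dom_stable.
by right; exists j; split=> //; exists (ccomp g f); rewrite act_comp.
Qed.

Lemma prism_x_nondsurj c (f : chom Delta c n.+1) i (l : 'I_n.+2) :
  i <= n -> (forall p, proj1_sig f p != l) -> l < i \/ i.+1 < l ->
  ~ dsurj (ccomp (prism_x n i) f).
Proof.
move=> le_in f_misses l_far f_surj.
have hv : (if l < i then l : nat else (l : nat).-1) < n.+1.
  by have := ltn_ord l; case: ifP; lia.
have [p fp] := f_surj (Ordinal hv).
have := f_equal val fp; rewrite /= prism_xE //.
by have := f_misses p; rewrite -val_eqE /=; case: ifP; case: ltnP; lia.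
Qed.

Lemma prism_x_dsurj c (f : chom Delta c n.+1) i (l0 : 'I_n.+2) :
  i <= n -> l0 = i :> nat \/ l0 = i.+1 :> nat ->
  (forall l : 'I_n.+2, l != l0 -> exists p, proj1_sig f p = l) ->
  dsurj (ccomp (prism_x n i) f).
Proof.
move=> le_in l0_near f_hits y.
pose l : nat := if y < i then y : nat else if i < y then y.+1
                else if l0 == i :> nat then i.+1 else i.
have hl : l < n.+2 by have := ltn_ord y; rewrite /l; repeat case: ifP => ?; lia.
have [|p fp] := f_hits (Ordinal hl).
  by rewrite -val_eqE /= /l; repeat case: ifP => ?; lia.
exists p; apply: val_inj; rewrite /= prism_xE // fp /= /l.
by repeat case: ifP => ?; lia.
Qed.

Lemma act_prism_simplex_eq c (f g : chom Delta c n.+1) i j :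
  act T f (prism_simplex i) = act T g (prism_simplex j) ->
  (forall p, (i < proj1_sig f p) = (j < proj1_sig g p)) /\
  act B (ccomp (prism_x n i) f) b = act B (ccomp (prism_x n j) g) b.
Proof.
rewrite !act_prism_simplex => -[e1 e2]; split=> // p.
have := f_equal (fun F => val (F p)) e1.
by rewrite /= !prism_tE; case: (i < _); case: (j < _).
Qed.

Lemma act_prism_simplex_succ c (f : chom Delta c n.+1) i : i < n ->
  (forall p, proj1_sig f p != i.+1 :> nat) ->
  act T f (prism_simplex i) = act T f (prism_simplex i.+1).
Proof.
move=> lt_in f_misses; rewrite !act_prism_simplex; congr pair.
  apply: sIntv_ext => p; apply: val_inj; rewrite /= !prism_tE.
  by have := f_misses p; case: ltnP; case: ltnP; lia.
congr (act B _ b); apply: dhom_ext => p; apply: val_inj; rewrite /= !prism_xE; try lia.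
by have := f_misses p; case: ltnP; case: ltnP; lia.
Qed.

Lemma act_prism_simplex_pred c (f : chom Delta c n.+1) i : 0 < i <= n ->
  (forall p, proj1_sig f p != i :> nat) ->
  act T f (prism_simplex i) = act T f (prism_simplex i.-1).
Proof.
move=> /andP [gt_i0 le_in] f_misses; rewrite !act_prism_simplex; congr pair.
  apply: sIntv_ext => p; apply: val_inj; rewrite /= !prism_tE.
  by have := f_misses p; case: ltnP; case: ltnP; lia.
congr (act B _ b); apply: dhom_ext => p; apply: val_inj; rewrite /= !prism_xE; try lia.
by have := f_misses p; case: ltnP; case: ltnP; lia.
Qed.

Lemma act_prism_simplex_fst c (f : chom Delta c n.+1) i :
  (act T f (prism_simplex i)).1 = endpt k c <->
  forall p, (i < proj1_sig f p) = (k : nat) :> nat.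
Proof.
rewrite act_prism_simplex /=; split=> [e p|e].
  by have := f_equal (fun t => val (proj1_sig t p)) e; rewrite /= prism_tE.
by apply: sIntv_ext => p; apply: val_inj; rewrite /= prism_tE e.
Qed.

Lemma act_prism_simplex_inj J i c (f g : chom Delta c n.+1) : i <= n ->
  ~ prism_dom J (act T f (prism_simplex i)) ->
  act T f (prism_simplex i) = act T g (prism_simplex i) -> f = g.
Proof.
move=> le_in f_out e.
have x_surj : dsurj (ccomp (prism_x n i) f).
  by apply: (act_notin_dsurj S_stable b_notin below_in) => Sx; apply: f_out; left; left;
     rewrite act_prism_simplex.
have [et ex] := act_prism_simplex_eq e.
have fg := dsurj_act_inj S_stable b_notin below_in x_surj ex.
apply: dhom_ext => p; apply: val_inj; have := f_equal (fun F => val (proj1_sig F p)) fg.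
by rewrite /= !prism_xE //; have := et p; do 2 case: ltnP; lia.
Qed.

(* The faces of the [i]-th simplex missing a vertex other than [(0,i)] and
   [(1,i)] lie over proper faces of [b]; of the two remaining facets, one is
   shared with the previously attached neighbour (or lies over the end [k])
   and the other is the one the horn filler creates. *)
Lemma prism_dom_horn0 J i c (f : chom Delta c n.+1) :
  (k : nat) = 0 -> i <= n -> (i < n -> J i.+1) -> (forall j, J j -> i < j <= n) ->
  prism_dom J (act T f (prism_simplex i)) <-> horn_pred (inord i) f.
Proof.
move=> k0 le_in J_next J_above; have vi : (inord i : 'I_n.+2) = i :> nat by rewrite inordK; lia.
split=> [D|[l [li f_misses]]].
- apply: NNPP => /not_horn_pred f_hits.
  have x_surj : dsurj (ccomp (prism_x n i) f).
    by apply: (prism_x_dsurj (l0 := inord i)) => //; left.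
  have [pM fpM] : exists p, proj1_sig f p = ord_max.
    by apply: f_hits; rewrite -val_eqE /= vi; lia.
  have [p1 fp1] : exists p, proj1_sig f p = inord i.+1.
    by apply: f_hits; rewrite -val_eqE /= vi inordK; lia.
  case: D => [[Sx|/act_prism_simplex_fst x_end]|[j [Jj [g e]]]].
  + by rewrite act_prism_simplex in Sx; apply: (dsurj_act_notin S_stable b_notin x_surj Sx).
  + by have := x_end pM; rewrite fpM k0 /=; case: ltnP; lia.
  + have [et ex] := act_prism_simplex_eq e.
    have := f_equal (fun F => val (proj1_sig F p1))
      (dsurj_act_inj S_stable b_notin below_in x_surj ex).
    have /andP [lt_ij le_jn] := J_above j Jj.
    have := et p1; have := f_equal val fp1; rewrite /= !prism_xE // inordK; last lia.
    by move=> ->; case: ltnP; case: ltnP; lia.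
- have li' : (l : nat) != i by rewrite -vi val_eqE.
  have [l_far|] := boolP ((l < i) || (i.+1 < l)).
    left; left; rewrite act_prism_simplex /=.
    apply: (nondsurj_act_in S_stable b_notin below_in).
    by apply: (prism_x_nondsurj le_in f_misses); case/orP: l_far; [left|right].
  rewrite negb_or -!leqNgt => /andP [le_li le_il]; have l_succ : (l : nat) = i.+1 by lia.
  have f_misses' p : proj1_sig f p != l :> nat by rewrite val_eqE.
  have [lt_in|ge_in] := ltnP i n.
    right; exists i.+1; split; first exact: J_next.
    by exists f; apply: act_prism_simplex_succ => // p; rewrite -l_succ.
  left; right; apply/act_prism_simplex_fst => p; rewrite k0.
  by have := f_misses' p; have := ltn_ord (proj1_sig f p); case: ltnP; lia.
Qed.

Lemma prism_dom_horn1 J i c (f : chom Delta c n.+1) :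
  (k : nat) = 1 -> i <= n -> (0 < i -> J i.-1) -> (forall j, J j -> j < i) ->
  prism_dom J (act T f (prism_simplex i)) <-> horn_pred (inord i.+1) f.
Proof.
move=> k1 le_in J_prev J_below.
have vi : (inord i.+1 : 'I_n.+2) = i.+1 :> nat by rewrite inordK; lia.
split=> [D|[l [li f_misses]]].
- apply: NNPP => /not_horn_pred f_hits.
  have x_surj : dsurj (ccomp (prism_x n i) f).
    by apply: (prism_x_dsurj (l0 := inord i.+1)) => //; right.
  have [p0 fp0] : exists p, proj1_sig f p = ord0.
    by apply: f_hits; rewrite -val_eqE /= vi.
  have [p1 fp1] : exists p, proj1_sig f p = inord i.
    by apply: f_hits; rewrite -val_eqE /= vi inordK; lia.
  case: D => [[Sx|/act_prism_simplex_fst x_end]|[j [Jj [g e]]]].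
  + by rewrite act_prism_simplex in Sx; apply: (dsurj_act_notin S_stable b_notin x_surj Sx).
  + by have := x_end p0; rewrite fp0 k1.
  + have [et ex] := act_prism_simplex_eq e.
    have := f_equal (fun F => val (proj1_sig F p1))
      (dsurj_act_inj S_stable b_notin below_in x_surj ex).
    have lt_ji := J_below j Jj; have le_jn : j <= n by lia.
    have := et p1; have := f_equal val fp1; rewrite /= !prism_xE // inordK; last lia.
    by move=> ->; case: ltnP; case: ltnP; lia.
- have li' : (l : nat) != i.+1 by rewrite -vi val_eqE.
  have [l_far|] := boolP ((l < i) || (i.+1 < l)).
    left; left; rewrite act_prism_simplex /=.
    apply: (nondsurj_act_in S_stable b_notin below_in).
    by apply: (prism_x_nondsurj le_in f_misses); case/orP: l_far; [left|right].
  rewrite negb_or -!leqNgt => /andP [le_li le_il]; have l_i : (l : nat) = i by lia.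
  have f_misses' p : proj1_sig f p != l :> nat by rewrite val_eqE.
  have [i0|gt_i0] := posnP i.
    left; right; apply/act_prism_simplex_fst => p; rewrite k1 i0.
    by have := f_misses' p; rewrite l_i i0; case: ltnP; lia.
  right; exists i.-1; split; first exact: J_prev.
  by exists f; apply: act_prism_simplex_pred; [rewrite gt_i0|move=> p; rewrite -l_i].
Qed.

Lemma k_cases : (k : nat) = 0 \/ (k : nat) = 1.
Proof. by case: k => [[|[|]]] //=; [left|right]. Qed.

(* Starting from the end [k] of the prism, its simplices are attached in the
   order [n, n-1, ..., 0] if [k = 0] and [0, 1, ..., n] if [k = 1]; each new
   one meets what is already there along a horn. *)
Definition prism_attached (r j : nat) : Prop :=
  if (k : nat) == 0 then n.+1 - r <= j <= n else j < r.
Definition prism_next (r : nat) : nat := if (k : nat) == 0 then n - r else r.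
Definition prism_horn (r : nat) : 'I_n.+2 :=
  if (k : nat) == 0 then inord (n - r) else inord r.+1.

Variables (h : forall c, T c -> E c).
Hypothesis h_lift : partial_lift q w (rel_dom k S) h.

Lemma prism_fill r : r <= n.+1 -> exists h' : forall c, T c -> E c,
  (forall c x, rel_dom k S x -> h' c x = h x) /\
  partial_lift q w (prism_dom (prism_attached r)) h'.
Proof.
elim: r => [_|r IH lt_rn].
  exists h; split=> //; apply: partial_lift_sub h_lift => c x [//|[j [Jj _]]].
  by move: Jj; rewrite /prism_attached; case: ifP => _; lia.
have [h1 [h1_h h1_lift]] := IH (ltnW lt_rn).
have le_next : prism_next r <= n by rewrite /prism_next; case: ifP => _; lia.
have faces_in c (f : chom Delta c n.+1) :
    prism_dom (prism_attached r) (act T f (prism_simplex (prism_next r))) <->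
    horn_pred (prism_horn r) f.
  rewrite /prism_horn /prism_next /prism_attached.
  case: k_cases => kv; rewrite kv /=.
  - by apply: prism_dom_horn0 => // *; lia.
  - by apply: prism_dom_horn1 => // *; lia.
have [h2 [h2_h1 h2_lift]] := partial_lift_add_simplex q_kan (@prism_dom_stable _) h1_lift
  faces_in (fun c f g => @act_prism_simplex_inj _ _ c f g le_next).
exists h2; split=> [c x Dx|]; first by rewrite h2_h1; [apply: h1_h|left].
apply: partial_lift_sub h2_lift => c x [Dx|[j [Jj [g ->]]]]; first by left; left.
have [->|ne] := eqVneq j (prism_next r); first by right; exists g.
left; right; exists j; split; last by exists g.
by move: ne Jj; rewrite /prism_attached /prism_next; case: ifP => _ /eqP; lia.
Qed.

Lemma prism_cover c (t : sIntv c) (f : chom Delta c n) :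
  exists j, j <= n /\ exists g : chom Delta c n.+1, (t, act B f b) = act T g (prism_simplex j).
Proof.
have t_mono := tri_hom_mono t.
have t01 p : proj1_sig t p = 0 :> nat \/ proj1_sig t p = 1 :> nat.
  by case: (proj1_sig t p) => [[|[|]]] //= _; [left|right].
have [j [le_jn [t0_le t1_ge]]] : exists j, j <= n /\
    (forall p, proj1_sig t p = 0 :> nat -> proj1_sig f p <= j) /\
    (forall p, proj1_sig t p = 1 :> nat -> j <= proj1_sig f p).
  have [/existsP [p0 tp0]|] := boolP [exists p, proj1_sig t p == 1 :> nat].
    case: (@arg_minnP _ p0 (fun p => proj1_sig t p == 1 :> nat) (@nat_of_ord _) tp0).
    move=> p1 /eqP tp1 p1_min; exists (proj1_sig f p1); split.
      by have := ltn_ord (proj1_sig f p1); lia.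
    split=> p tp; apply: dhom_mono; last by apply: p1_min; rewrite tp.
    by rewrite leqNgt; apply/negP => /ltnW /t_mono; rewrite tp tp1.
  rewrite negb_exists => /forallP t_ne1; exists n; split=> //; split=> p tp.
    by have := ltn_ord (proj1_sig f p); lia.
  by have := t_ne1 p; rewrite tp.
pose gf (p : 'I_c.+1) : 'I_n.+2 := inord (proj1_sig f p + proj1_sig t p).
have gfE p : gf p = proj1_sig f p + proj1_sig t p :> nat.
  by rewrite inordK //; have := ltn_ord (proj1_sig f p); case: (t01 p); lia.
have gf_mono (p p' : 'I_c.+1) : p <= p' -> gf p <= gf p'.
  by move=> le_pp'; rewrite !gfE; apply: leq_add; [apply: dhom_mono|apply: t_mono].
exists j; split=> //; exists (exist _ gf gf_mono); rewrite act_prism_simplex; congr pair.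
  apply: sIntv_ext => p; apply: val_inj; rewrite /= prism_tE gfE.
  by case: (t01 p) => tp; [have := t0_le p tp|have := t1_ge p tp]; rewrite tp; case: ltnP; lia.
congr (act B _ b); apply: dhom_ext => p; apply: val_inj; rewrite /= prism_xE // gfE.
by case: (t01 p) => tp; [have := t0_le p tp|have := t1_ge p tp]; rewrite tp; case: ltnP; lia.
Qed.

Lemma prism_extend : exists h' : forall c, T c -> E c,
  (forall c x, rel_dom k S x -> h' c x = h x) /\
  partial_lift q w (fun c x => rel_dom k S x \/ exists f : chom Delta c n, x.2 = act B f b) h'.
Proof.
have [h' [h'_h h'_lift]] := prism_fill (leqnn n.+1).
exists h'; split=> //; apply: partial_lift_sub h'_lift => c [t y] [Dx|[f /= ->]].
  by left.
have [j [le_jn [g e]]] := prism_cover t f.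
right; exists j; split; last by exists g.
by rewrite /prism_attached; case: ifP => _; lia.
Qed.

End Prism.

(** * Relative lifts and Zorn's lemma *)

Definition endpoint_pp_lifts (k : 'I_2) (A B : sSet) (m : NT A B) (E Y : sSet) (q : NT E Y) :=
  forall (u : NT (prodP sIntv A) E) (v : NT B E) (w : NT (prodP sIntv B) Y),
    (forall c a, u c (endpt k c, a) = v c (m c a)) ->
    (forall c t a, q c (u c (t, a)) = w c (t, m c a)) ->
    (forall c b, q c (v c b) = w c (endpt k c, b)) ->
    exists h : NT (prodP sIntv B) E,
      [/\ forall c t a, h c (t, m c a) = u c (t, a),
          forall c b, h c (endpt k c, b) = v c b &
          forall c tb, q c (h c tb) = w c tb].

Section RelativeLifts.
Variables (k : 'I_2) (A B E Y : sSet) (m : NT A B) (q : NT E Y).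
Hypotheses (m_mono : mono m) (q_kan : kan_fib q).
Variables (u : NT (prodP sIntv A) E) (v : NT B E) (w : NT (prodP sIntv B) Y).
Hypothesis uv : forall c a, u c (endpt k c, a) = v c (m c a).
Hypothesis uw : forall c t a, q c (u c (t, a)) = w c (t, m c a).
Hypothesis vw : forall c b, q c (v c b) = w c (endpt k c, b).

Local Notation T := (prodP sIntv B).

(* A lift defined on [(Delta^1 x S) + ({k} x B)] for a subcomplex [S] of [B]
   containing the image of [m]. *)
Record rel_lift := {
  rl_dom : forall c, B c -> Prop;
  rl_map : forall c, T c -> E c;
  rl_dom_stable : stable rl_dom;
  rl_dom_m : forall c a, rl_dom (m c a);
  rl_lift : partial_lift q w (rel_dom k rl_dom) rl_map;
  rl_map_u : forall c t a, rl_map (t, m c a) = u c (t, a);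
  rl_map_v : forall c y, rl_map (endpt k c, y) = v c y }.

Definition rl_le (r s : rel_lift) : Prop :=
  (forall c y, rl_dom r y -> rl_dom s (c:=c) y) /\
  (forall c x, rel_dom k (rl_dom r) x -> rl_map s (c:=c) x = rl_map r x).

Lemma rl_le_refl r : rl_le r r.
Proof. by []. Qed.

Lemma rl_le_trans r s t : rl_le r s -> rl_le s t -> rl_le r t.
Proof.
move=> [rs_dom rs_map] [st_dom st_map]; split=> [c y /rs_dom /st_dom //|c x Dx].
by rewrite st_map ?rs_map //; case: Dx => [/rs_dom|]; [left|right].
Qed.

Definition rel_lift_base : rel_lift.
Proof.
pose h c (x : T c) : E c :=
  match excluded_middle_informative (exists a, x.2 = m c a) with
  | left ex => u c (x.1, proj1_sig (constructive_indefinite_description _ ex))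
  | right _ => v c x.2
  end.
have h_u c t a : h c (t, m c a) = u c (t, a).
  rewrite /h; case: excluded_middle_informative => [ex|[]]; last by exists a.
  by case: constructive_indefinite_description => a' /= /m_mono ->.
have h_v c y : h c (endpt k c, y) = v c y.
  rewrite /h; case: excluded_middle_informative => [ex|//].
  by case: constructive_indefinite_description => a /= ->; rewrite uv.
refine {| rl_dom := fun c y => exists a, y = m c a; rl_map := h |} => //.
- by move=> c d f y [a ->]; exists (act A f a); rewrite nt_nat.
- by move=> c a; exists a.
- split=> [c d f [t y] [[a /= ->]|/= ->]|c [t y] [[a /= ->]|/= ->]].
  + by rewrite -(nt_nat m) !h_u; apply: (nt_nat u f (t, a)).
  + by move: (act_endpt k f) => /= ->; rewrite !h_v nt_nat.
  + by rewrite h_u uw.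
  + by rewrite h_v vw.
Qed.

Lemma rel_lift_chain_ub (C : rel_lift -> Prop) :
  (forall r s, C r -> C s -> rl_le r s \/ rl_le s r) ->
  exists U : rel_lift, forall r, C r -> rl_le r U.
Proof.
move=> C_total; have [[r0 Cr0]|C0] := classic (exists r, C r); last first.
  by exists rel_lift_base => r Cr; case: C0; exists r.
have agree r1 r2 c (x : T c) : C r1 -> C r2 ->
    rel_dom k (rl_dom r1) x -> rel_dom k (rl_dom r2) x -> rl_map r1 x = rl_map r2 x.
  by move=> C1 C2 D1 D2; case: (C_total _ _ C1 C2) => -[_ ->].
pose dom c (y : B c) := exists r, C r /\ rl_dom r y.
pose h c (x : T c) : E c :=
  match excluded_middle_informative (dom c x.2) with
  | left ex => rl_map (proj1_sig (constructive_indefinite_description _ ex)) x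
  | right _ => rl_map r0 x
  end.
have hE r c (x : T c) : C r -> rel_dom k (rl_dom r) x -> h c x = rl_map r x.
  move=> Cr Dx; rewrite /h; case: excluded_middle_informative => [ex|nex].
    by case: constructive_indefinite_description => r1 [C1 D1] /=; apply: agree => //; left.
  apply: agree => //; right; case: Dx => // Dx.
  by case: nex; exists r.
have dom_witness c (x : T c) : rel_dom k dom x -> exists r, C r /\ rel_dom k (rl_dom r) x.
  case=> [[r [Cr Dr]]|x_end]; first by exists r; split => //; left.
  by exists r0; split=> //; right.
have dom_stable : stable dom.
  by move=> c d f y [r [Cr Dr]]; exists r; split=> //; apply: rl_dom_stable.
have dom_m c a : dom c (m c a) by exists r0; split=> //; apply: rl_dom_m.
have h_lift : partial_lift q w (rel_dom k dom) h.
  split=> [c d f x /dom_witness [r [Cr Dx]]|c x /dom_witness [r [Cr Dx]]].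
  - rewrite (hE r) //; last exact: (rel_dom_stable (@rl_dom_stable r)).
    by rewrite (hE r) //; apply: (proj1 (rl_lift r)).
  - by rewrite (hE r) //; apply: (proj2 (rl_lift r)).
have h_u c t a : h c (t, m c a) = u c (t, a).
  by rewrite (hE r0) //; [apply: rl_map_u|left; apply: rl_dom_m].
have h_v c y : h c (endpt k c, y) = v c y.
  by rewrite (hE r0) //; [apply: rl_map_v|right].
exists (Build_rel_lift dom_stable dom_m h_lift h_u h_v) => r Cr.
by split=> [c y Dy|c x Dx /=]; [exists r|apply: hE].
Qed.

Lemma rel_lift_grow (r : rel_lift) n (b : B n) : ~ rl_dom r b ->
  (forall n', n' < n -> forall y : B n', rl_dom r y) ->
  exists s, rl_le r s /\ rl_dom s b.
Proof.
move=> b_notin below_in.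
have [h [h_r h_lift]] := prism_extend q_kan (@rl_dom_stable r) b_notin below_in (rl_lift r).
pose dom c (y : B c) := rl_dom r y \/ exists f : chom Delta c n, y = act B f b.
have dom_stable : stable dom.
  move=> c d f y [Dy|[g ->]]; first by left; apply: rl_dom_stable.
  by right; exists (ccomp g f); rewrite act_comp.
have dom_m c a : dom c (m c a) by left; apply: rl_dom_m.
have h_lift' : partial_lift q w (rel_dom k dom) h.
  apply: partial_lift_sub h_lift => c x [[Dx|[g ->]]|x_end].
  - by left; left.
  - by right; exists g.
  - by left; right.
have h_u c t a : h c (t, m c a) = u c (t, a).
  by rewrite h_r; [apply: rl_map_u|left; apply: rl_dom_m].
have h_v c y : h c (endpt k c, y) = v c y.
  by rewrite h_r; [apply: rl_map_v|right].
exists (Build_rel_lift dom_stable dom_m h_lift' h_u h_v); split.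
  by split=> [c y Dy|c x /h_r //]; left.
by right; exists (cid (n : Delta)); rewrite act_id.
Qed.

Lemma rel_lift_full : exists r : rel_lift, forall c (y : B c), rl_dom r y.
Proof.
pose le r s := boolp.asbool (rl_le r s).
have [|||r r_max] := @classical_sets.ZL_preorder _ rel_lift_base le.
- by move=> r; apply/boolp.asboolP; apply: rl_le_refl.
- by move=> r s t /boolp.asboolP rs /boolp.asboolP st; apply/boolp.asboolP; apply: rl_le_trans st.
- move=> C C_total; have [|U U_ub] := @rel_lift_chain_ub C.
    by move=> r s Cr Cs; case: (C_total r s Cr Cs) => /boolp.asboolP; [left|right].
  by exists U => r Cr; apply/boolp.asboolP; apply: U_ub.
exists r => c y; apply: NNPP => y_notin.
have [|n] := ex_minnP (P := fun n => boolp.asbool (exists b : B n, ~ rl_dom r b)).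
  by exists c; apply/boolp.asboolP; exists y.
move=> /boolp.asboolP [b b_notin] n_min.
have below_in n' : n' < n -> forall y : B n', rl_dom r y.
  move=> lt_n'n y'; apply: NNPP => y'_notin.
  by have := n_min n' (introT (boolp.asboolP _) (ex_intro _ y' y'_notin)); rewrite leqNgt lt_n'n.
have [s [rs Ds]] := rel_lift_grow b_notin below_in.
have /boolp.asboolP [sr _] := r_max s (introT (boolp.asboolP _) rs).
exact: b_notin (sr _ _ Ds).
Qed.

Lemma rel_lift_solution : exists h : NT T E,
  [/\ forall c t a, h c (t, m c a) = u c (t, a),
      forall c y, h c (endpt k c, y) = v c y &
      forall c x, q c (h c x) = w c x].
Proof.
have [r r_full] := rel_lift_full.
have Dx c (x : T c) : rel_dom k (rl_dom r) x by left; apply: r_full.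
exists (Build_NT (fun c d f x => proj1 (rl_lift r) c d f x (Dx d x))).
by split=> [||c x]; [apply: rl_map_u|apply: rl_map_v|apply: (proj2 (rl_lift r))].
Qed.

End RelativeLifts.

Lemma kan_fib_endpoint_pp_lifts k (A B E Y : sSet) (m : NT A B) (q : NT E Y) :
  mono m -> kan_fib q -> endpoint_pp_lifts k m q.
Proof. by move=> m_mono q_kan u v w; apply: rel_lift_solution. Qed.

(** * The right adjoint of restriction along [blacktriangle] *)

Definition ran_act (E : sSet) (c d : SL) (f : chom SL c d)
  (xi : NT (restrict blacktriangle (yo d)) E) : NT (restrict blacktriangle (yo c)) E.
Proof.
refine (@Build_NT Delta (restrict blacktriangle (yo c)) E (fun n phi => xi n (ccomp f phi)) _).
by move=> n n' g phi /=; rewrite -nt_nat /=; congr (xi _ _); apply: ccomp_assoc.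
Defined.

Definition Ran (E : sSet) : slPSh.
Proof.
refine {| ps := fun c => NT (restrict blacktriangle (yo c)) E; act := @ran_act E |}.
- by move=> c xi; apply: nt_ext => n phi /=; congr (xi _ _); apply: sig_ext.
- by move=> a b c f g xi; apply: nt_ext => n phi /=; congr (xi _ _); apply: sig_ext.
Defined.

Definition ran_map (E Y : sSet) (q : NT E Y) : NT (Ran E) (Ran Y).
Proof.
refine (@Build_NT SL (Ran E) (Ran Y) (fun c xi => ntcomp q xi) _).
by move=> c d f xi; apply: nt_ext.
Defined.

Definition ran_counit (E : sSet) : NT (restrict blacktriangle (Ran E)) E.
Proof.
refine (@Build_NT Delta (restrict blacktriangle (Ran E)) E
  (fun n xi => xi n (cid (tri n : SL))) _).
move=> n n' g xi /=; rewrite -nt_nat /=; congr (xi _ _); apply: sig_ext.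
Defined.

Definition ran_counit_inv_at (E : sSet) n (x : E n) : Ran E (tri n : SL).
Proof.
refine (@Build_NT Delta (restrict blacktriangle (yo (tri n : SL))) E
  (fun n' phi => act E (untri_map phi) x) _).
by move=> a b g phi /=; rewrite -act_comp; congr (act E _ x); apply: sig_ext.
Defined.

Definition ran_counit_inv (E : sSet) : NT E (restrict blacktriangle (Ran E)).
Proof.
refine (@Build_NT Delta E (restrict blacktriangle (Ran E)) (@ran_counit_inv_at E) _).
move=> a b g x; apply: nt_ext => n phi /=; rewrite -act_comp.
by congr (act E _ x); apply: sig_ext.
Defined.

Lemma ran_counit_invK (E : sSet) n (x : E n) : ran_counit E n (ran_counit_inv E n x) = x.
Proof. by rewrite /= -[RHS]act_id; congr (act E _ x); apply: sig_ext. Qed.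

Definition ran_adjunct (G : slPSh) (E : sSet) (u : NT G (Ran E)) :
  NT (restrict blacktriangle G) E := ntcomp (ran_counit E) (restrict_nt blacktriangle u).

Definition ran_transpose_at (G : slPSh) (E : sSet) (v : NT (restrict blacktriangle G) E)
  c (y : G c) : Ran E c.
Proof.
refine (@Build_NT Delta (restrict blacktriangle (yo c)) E (fun n phi => v n (act G phi y)) _).
by move=> a b g phi /=; rewrite -nt_nat /= -act_comp.
Defined.

Definition ran_transpose (G : slPSh) (E : sSet) (v : NT (restrict blacktriangle G) E) :
  NT G (Ran E).
Proof.
refine (@Build_NT SL G (Ran E) (ran_transpose_at v) _).
by move=> c d f y; apply: nt_ext => n phi /=; rewrite -act_comp.
Defined.

Lemma ran_eval (G : slPSh) (E : sSet) (u : NT G (Ran E)) c y n phi :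
  u c y n phi = ran_adjunct u n (act G phi y).
Proof. by rewrite /= (nt_nat u) /=; congr (u c y n _); apply: sig_ext. Qed.

Definition restrict_prod (A : slPSh) :
  NT (prodP sIntv (restrict blacktriangle A)) (restrict blacktriangle (prodP Intv A)) :=
  @Build_NT Delta (prodP sIntv (restrict blacktriangle A)) (restrict blacktriangle (prodP Intv A))
    (fun n x => x) (fun _ _ _ _ => erefl).

Definition restrict_prod_inv (A : slPSh) :
  NT (restrict blacktriangle (prodP Intv A)) (prodP sIntv (restrict blacktriangle A)) :=
  @Build_NT Delta (restrict blacktriangle (prodP Intv A)) (prodP sIntv (restrict blacktriangle A))
    (fun n x => x) (fun _ _ _ _ => erefl).

Definition restrict_unit_prod (A : slPSh) :
  NT (restrict blacktriangle A) (restrict blacktriangle (prodP (termP SL) A)) :=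
  @Build_NT Delta (restrict blacktriangle A) (restrict blacktriangle (prodP (termP SL) A))
    (fun n a => (tt, a)) (fun _ _ _ _ => erefl).

Lemma ran_kan_fib (E Y : sSet) (q : NT E Y) : kan_fib q -> cub_fib (ran_map q).
Proof.
move=> q_kan k A B m m_mono u v w uv uw vw.
have [||||h [h_m h_end h_q]] := kan_fib_endpoint_pp_lifts (k := k)
    (m := restrict_nt blacktriangle m) _ q_kan
    (u := ntcomp (ran_adjunct u) (restrict_prod A))
    (v := ntcomp (ran_adjunct v) (restrict_unit_prod B))
    (w := ntcomp (ran_adjunct w) (restrict_prod B)).
- by move=> n; apply: m_mono.
- by move=> n a /=; rewrite (uv _ tt).
- by move=> n t a /=; rewrite -uw.
- by move=> n b /=; rewrite -(vw _ tt).
exists (ran_transpose (ntcomp h (restrict_prod_inv B))); split; [|split].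
- move=> c i a; apply: nt_ext => n phi /=.
  by rewrite -(nt_nat m) h_m (ran_eval u).
- move=> c [] b; apply: nt_ext => n phi /=.
  have -> : SLcomp (const_hom c k) phi = endpt k n by apply: sig_ext.
  by rewrite h_end (ran_eval v).
- move=> c [i b]; apply: nt_ext => n phi /=.
  by rewrite h_q (ran_eval w).
Qed.

(** * Lifting properties of the derived unit *)

Lemma restrict_lifts (A B : slPSh) (i : NT A B) (E Y : sSet) (q : NT E Y) :
  lifts i (ran_map q) -> lifts (restrict_nt blacktriangle i) q.
Proof.
move=> i_lifts u v uv.
have [|H [H_i H_q]] := i_lifts (ran_transpose u) (ran_transpose v).
  by move=> c a; apply: nt_ext => n phi /=; rewrite uv /= nt_nat.
exists (ran_adjunct H); split=> [n a|n b].
- by rewrite /= H_i /= act_id.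
- by have := f_equal (fun xi : Ran Y (tri n : SL) => xi n (cid _)) (H_q _ b); rewrite /= act_id.
Qed.

Lemma lan_unit_ext (X : sSet) (L : slPSh) (eta : NT X (restrict blacktriangle L)) :
  is_lan_unit eta -> forall (Y : slPSh) (h1 h2 : NT L Y),
  (forall n x, h1 (tri n) (eta n x) = h2 (tri n) (eta n x)) -> forall c y, h1 c y = h2 c y.
Proof.
move=> lan Y h1 h2 h12 c y.
have [h [_ h_uniq]] := lan Y (ntcomp (restrict_nt blacktriangle h2) eta).
by rewrite (h_uniq h1) ?(h_uniq h2).
Qed.

Lemma lan_unit_lifts (X : sSet) (L : slPSh) (eta : NT X (restrict blacktriangle L)) :
  is_lan_unit eta -> forall (E Y : sSet) (q : NT E Y), lifts eta q.
Proof.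
move=> lan E Y q u v uv.
have [u' [u'_eta _]] := lan _ (ntcomp (ran_counit_inv E) u).
have u'_q : forall c l, ntcomp (ran_map q) u' c l = ran_transpose v c l.
  apply: (lan_unit_ext lan) => n x /=; rewrite u'_eta; apply: nt_ext => n' phi /=.
  by rewrite nt_nat uv -nt_nat /= untri_mapK.
exists (ran_adjunct u'); split=> [n x|n l].
- by change (ran_counit E n (u' (tri n) (eta n x)) = u n x); rewrite u'_eta ran_counit_invK.
- by have := f_equal (fun xi : Ran Y (tri n : SL) => xi n (cid _)) (u'_q _ l); rewrite /= act_id.
Qed.

Lemma lifts_comp (C : Cat) (A B D X Y : PSh C) (i : NT A B) (i' : NT B D) (p : NT X Y) :
  lifts i p -> lifts i' p -> lifts (ntcomp i' i) p.
Proof.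
move=> i_lifts i'_lifts u v uv.
have [h1 [h1_i h1_p]] := i_lifts u (ntcomp v i') uv.
have [h2 [h2_i' h2_p]] := i'_lifts h1 v h1_p.
by exists h2; split=> // c a; rewrite /= h2_i' h1_i.
Qed.

Definition id_nt (C : Cat) (X : PSh C) : NT X X :=
  @Build_NT C X X (fun c x => x) (fun _ _ _ _ => erefl).

Lemma KQ_weq_of_triv_cof (X Y : sSet) (f : NT X Y) : KQ_triv_cof f -> KQ_weq f.
Proof.
move=> f_cof; exists Y, f, (id_nt Y); split=> //; split=> // A B m _ u v uv.
by exists v; split=> // c a; rewrite -uv.
Qed.

Theorem mainTheorem13 :
  forall (X : sSet) (L : slPSh) (eta : NT X (restrict blacktriangle L)),
    is_lan_unit eta ->
    forall (F : slPSh) (j : NT L F),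
      cub_triv_cof j -> cub_fibrant F ->
      KQ_weq (ntcomp (restrict_nt blacktriangle j) eta).
Proof.
move=> X L eta lan F j [_ j_lifts] _.
apply: KQ_weq_of_triv_cof => E Y q q_kan.
apply: lifts_comp; first exact: lan_unit_lifts.
by apply: restrict_lifts; apply: j_lifts; apply: ran_kan_fib.
Qed.
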